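(* Let $\mathcal{A}$ be a finite poset, $V$ a vector space and $(\pi_a)_{a\in\mathcal{A}}$ a family of projectors of $V$ satisfying the intersection property. Then $s_as_b=\delta_{a,b}s_a$ for all $a,b\in\mathcal{A}$.
   Context: $(s_a)_{a\in\mathcal{A}}$ is the unique family of endomorphisms of $V$ with $\pi_a=\sum_{b\le a}s_b$ for every $a$ (Möbius inversion). Intersection property: for all $a,b\in\mathcal{A}$, $\pi_a\pi_b=\sum_{c\le a,\ c\le b}s_c$. *)

From HB Require Import structures.
From mathcomp Require Export all_boot all_order all_algebra.
Set Implicit Arguments. Unset Strict Implicit. Unset Printing Implicit Defensive.
Export Order.TTheory GRing.Theory.

Local Open Scope ring_scope.

(* Möbius
   inversion gives the recursion s_b = pi_b - \sum_(c < b) s_c, and both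
   facts below are proved by well-founded induction along the strict order:
   - pi_a s_b = [b <= a] s_b: expand s_b by the recursion, apply the
     intersection property to pi_a pi_b and the induction hypothesis to the
     lower terms; everything cancels except the top term c = b;
   - s_a s_b = [a = b] s_b: expand s_a by the recursion, use the previous
     fact for pi_a s_b and the induction hypothesis for s_c s_b (c < a);
     what remains is [b <= a] s_b - [b < a] s_b = [a = b] s_b. *)

(* Well-founded induction on a finite partial order: the strict order has
   no infinite descending chain, since the set of elements below shrinks. *)
Lemma finPOrder_ind (d : Order.disp_t) (A : finPOrderType d) (P : A -> Prop) :
  (forall b, (forall c, (c < b)%O -> P c) -> P b) -> forall b, P b.
Proof.
move=> IH.
suff bounded n b : (#|[pred c : A | (c < b)%O]| < n)%N -> P b.
  by move=> b; apply: (bounded _ b).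
elim: n b => [|n IHn] b //= below_b; apply: IH => c lt_cb; apply: IHn.
rewrite ltnS in below_b; apply: leq_trans below_b; apply: proper_card.
apply/properP; split; last by exists c; rewrite !inE ?ltxx.
by apply/subsetP => x; rewrite !inE => lt_xc; apply: lt_trans lt_xc lt_cb.
Qed.

Lemma big_le_top (d : Order.disp_t) (A : finPOrderType d) (M : nmodType)
    (b : A) (P : pred A) (F : A -> M) :
  \sum_(c | (c <= b)%O && P c) F c
    = (if P b then F b else 0) + \sum_(c | (c < b)%O && P c) F c.
Proof.
case: ifP => Pb.
  rewrite (bigD1 b) /= ?lexx ?Pb //; congr (_ + _); apply: eq_bigl => c.
  by rewrite lt_neqAle; case: (c <= b)%O; case: (c != b); case: (P c).
rewrite add0r; apply: eq_bigl => c; rewrite lt_neqAle.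
by case: eqVneq => [->|]; rewrite ?Pb ?andbF.
Qed.

Lemma big_delta (I : finType) (M : nmodType) (P : pred I) (b : I) (x : M) :
  \sum_(c | P c) (if c == b then x else 0) = if P b then x else 0.
Proof.
rewrite -big_mkcondr; case: ifP => Pb.
  by rewrite (big_pred1 b) // => c /=; case: eqVneq => [->|]; rewrite ?Pb ?andbF.
by rewrite big_pred0 // => c; case: eqVneq => [->|]; rewrite ?Pb ?andbF.
Qed.

Section MoebiusComponents.

Context {d : Order.disp_t} {A : finPOrderType d} {K : pzRingType}.
Context {V : lmodType K} {s pi : A -> {linear V -> V} }.

Hypothesis pi_sum : forall a v, pi a v = \sum_(b | (b <= a)%O) s b v.
Hypothesis pi_pi : forall a b v,
  pi a (pi b v) = \sum_(c | ((c <= a)%O && (c <= b)%O)) s c v.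

Lemma s_rec b v : s b v = pi b v - \sum_(c | (c < b)%O) s c v.
Proof.
apply/eqP; rewrite eq_sym subr_eq pi_sum (bigD1 b) //=.
by rewrite (eq_bigl (fun c => (c < b)%O)) // => c; rewrite lt_neqAle andbC.
Qed.

Lemma pi_s a b v : pi a (s b v) = if (b <= a)%O then s b v else 0.
Proof.
elim/finPOrder_ind: b a v => b IH a v.
rewrite [in LHS]s_rec raddfB raddf_sum /=.
under eq_bigr => c lt_cb do rewrite IH //.
by rewrite -big_mkcondr pi_pi [X in X - _]big_andbC big_le_top addrK.
Qed.

Lemma s_s a b v : s a (s b v) = if a == b then s b v else 0.
Proof.
elim/finPOrder_ind: a b v => a IH b v.
rewrite [in LHS]s_rec /= pi_s.
under eq_bigr => c lt_ca do rewrite IH //.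
rewrite big_delta [(b <= a)%O]le_eqVlt eq_sym.
by case: eqVneq => [->|_]; rewrite ?ltxx ?subr0 //=; case: ifP; rewrite ?subrr.
Qed.

End MoebiusComponents.

Theorem mainTheorem7 (d : Order.disp_t) (A : finPOrderType d)
    (K : fieldType) (V : lmodType K)
    (pi s : A -> {linear V -> V})
    (Hproj : forall a v, pi a (pi a v) = pi a v)
    (Hs : forall a v, pi a v = \sum_(b | (b <= a)%O) s b v)
    (Hint : forall a b v,
        pi a (pi b v) = \sum_(c | ((c <= a)%O && (c <= b)%O)) s c v) :
  forall a b v, s a (s b v) = (if a == b then s a v else 0).
Proof.
move=> a b v; rewrite (s_s Hs Hint).
by case: eqVneq => [->|].
Qed.
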